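(* Let $\alpha\in(0,\infty)^T$ and $u_t(x)=\frac{1}{\alpha_t}[1-\exp(-\alpha_t x)]$, $t\in\mathbb{T}$. For $x\in\mathbb{R}$ and $Z\in L^\infty$, let $(X_t)\in\mathcal{A}(x-Z)$ be the optimal intertemporal allocation of $x-Z$, i.e. $\sum_{t\in\mathbb{T}}E[u_t(\tilde X_t)]=U(x-Z)$. Then $X_1=\frac{B_1}{\alpha_1}[\beta_1x-\log L_1(\alpha,-Z)]$ and, for $t=2,\dots,T$, $X_t=\frac{B_t}{\alpha_t}\Big[\beta_1x-\log L_t(\alpha,-Z)+\sum_{k=1}^{t-1}\frac{\beta_{k+1}}{\alpha_k}\log L_k(\alpha,-Z)\Big]$.
   Context: Let $T\ge 1$ be an integer and $\mathbb{T}=\{1,\dots,T\}$. Let $(\Omega,\mathcal{F},(\mathcal{F}_t)_{t\in\{0,1,\dots,T\}},P)$ be a filtered probability space and $L^{\infty}=L^{\infty}(\Omega,\mathcal{F}_T,P)$; write $E_t[Y]=E[Y\mid\mathcal{F}_t]$. Let $(r_t)_{t\in\mathbb{T}}$ be a bounded, nonnegative, predictable process, $B_0=1$, $B_t=\prod_{k=1}^t(1+r_k)$, and $\tilde X_t=X_t/B_t$. For $W\in L^\infty$, $\mathcal{A}(W)$ is the set of $(\mathcal{F}_t)$-adapted processes $(Y_t)_{t\in\mathbb{T}}$ with $Y_t\in L^\infty$ and $\sum_{t\in\mathbb{T}}\tilde Y_t=W$ a.s., and $U(W)=\sup\{\sum_{t\in\mathbb{T}}E[u_t(\tilde Y_t)]:(Y_t)\in\mathcal{A}(W)\}$.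 For $\alpha\in(0,\infty)^T$ define $\beta_t$ by $1/\beta_t=\sum_{k=t}^T 1/\alpha_k$. For $W\in L^\infty$ define $L_T(\alpha,W)=\exp(-\alpha_T W)$ and $L_{t-1}(\alpha,W)=E_{t-1}[L_t(\alpha,W)]^{\beta_{t-1}/\beta_t}$ for $t=2,\dots,T$. *)

From HB Require Import structures.
From mathcomp Require Import all_boot all_order all_algebra.
From mathcomp Require Import all_classical all_reals all_analysis.
Set Implicit Arguments. Unset Strict Implicit. Unset Printing Implicit Defensive.
Import Order.TTheory GRing.Theory Num.Theory.
Local Open Scope classical_set_scope.
Local Open Scope ring_scope.

Section Defs.
Context {d : measure_display} {Omega : measurableType d} {R : realType}.

Definition sub_measurable (G : set (set Omega)) (f : Omega -> R) : Prop :=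
  forall B : set R, measurable B -> G (f @^-1` B).

Definition filtration (T : nat) (F : nat -> set (set Omega)) : Prop :=
  (forall t, (t <= T)%N -> sigma_algebra setT (F t) /\ F t `<=` measurable) /\
  (forall s t, (s <= t)%N -> (t <= T)%N -> F s `<=` F t).

(* f is (a representative of) an element of L^infty(Omega, G, P) *)
Definition Linfty (P : probability Omega R) (G : set (set Omega)) (f : Omega -> R) :=
  sub_measurable G f /\ exists M : R, {ae P, forall w, `|f w| <= M}.

Definition is_cond_exp (P : probability Omega R) (G : set (set Omega))
    (Y C : Omega -> R) : Prop :=
  sub_measurable G C /\ P.-integrable setT (EFin \o C) /\
  forall A, G A -> (\int[P]_(w in A) (C w)%:E = \int[P]_(w in A) (Y w)%:E)%E.

Definition Bfac (r : nat -> Omega -> R) (t : nat) (w : Omega) : R :=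
  \prod_(1 <= k < t.+1) (1 + r k w).

Definition disc (r : nat -> Omega -> R) (X : nat -> Omega -> R) (t : nat)
  (w : Omega) : R := X t w / Bfac r t w.

Definition beta (T : nat) (alpha : nat -> R) (t : nat) : R :=
  (\sum_(t <= k < T.+1) (alpha k)^-1)^-1.

Definition admissible (P : probability Omega R) (T : nat) (F : nat -> set (set Omega))
    (r : nat -> Omega -> R) (W : Omega -> R) (Y : nat -> Omega -> R) : Prop :=
  (forall t, (1 <= t <= T)%N -> sub_measurable (F t) (Y t) /\ Linfty P (F T) (Y t)) /\
  {ae P, forall w, \sum_(1 <= t < T.+1) disc r Y t w = W w}.

Definition total_utility (P : probability Omega R) (T : nat) (u : nat -> R -> R)
    (r : nat -> Omega -> R) (Y : nat -> Omega -> R) : \bar R :=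
  (\sum_(1 <= t < T.+1) \int[P]_w (u t (disc r Y t w))%:E)%E.

Definition Uval (P : probability Omega R) (T : nat) (F : nat -> set (set Omega))
    (u : nat -> R -> R) (r : nat -> Omega -> R) (W : Omega -> R) : \bar R :=
  ereal_sup [set total_utility P T u r Y | Y in admissible P T F r W].

Definition is_L_family (P : probability Omega R) (T : nat) (F : nat -> set (set Omega))
    (alpha : nat -> R) (W : Omega -> R) (L : nat -> Omega -> R) : Prop :=
  (forall w, L T w = expR (- alpha T * W w)) /\
  (forall t, (2 <= t <= T)%N -> exists C : Omega -> R,
     is_cond_exp P (F t.-1) (L t) C /\
     forall w, L t.-1 w = powR (C w) (beta T alpha t.-1 / beta T alpha t)).

End Defs.

From HB Require Import structures.
From mathcomp Require Import all_boot all_order all_algebra.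
From mathcomp Require Import all_classical all_reals all_analysis.
From mathcomp Require Import measurable_realfun.
From mathcomp Require Import ring lra zify.
Import Order.TTheory GRing.Theory Num.Theory.
Local Open Scope classical_set_scope.
Local Open Scope ring_scope.

Set Implicit Arguments.
Unset Strict Implicit.
Unset Printing Implicit Defensive.

(* The candidate given by the formula, Y_t = B_t Y~_t, is admissible: the
   beta-weighted logarithms telescope, so that sum_t Y~_t = x - Z.  Its marginal
   utilities M_t = exp (- alpha_t Y~_t) form a martingale (M_(t+1) = L_(t+1) G_t
   and M_t = E_t[L_(t+1)] G_t with G_t F_t-measurable; this is exactly the
   recursion defining L), hence E[M_t D] = E[M_T D] for every bounded
   F_t-measurable D.  For an optimal X with deviations D_t = X~_t - Y~_t,
   concavity gives u_t(X~_t) = u_t(Y~_t) + M_t D_t - M_t g_t(D_t) with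
   g_t >= 0 vanishing only at 0.  The linear terms add up to
   E[M_T sum_t D_t] = 0, so optimality of X forces E[M_t g_t(D_t)] = 0 for
   every t, i.e. X = Y almost surely. *)

Lemma sum_mul_partial_sum {R : comNzRingType} (a c : nat -> R) n :
  \sum_(1 <= t < n) a t * \sum_(1 <= k < t) c k =
  \sum_(1 <= k < n) c k * \sum_(k.+1 <= t < n) a t.
Proof.
elim: n => [|n IH]; first by rewrite !big_geq.
have [->|n1] := posnP n; first by rewrite !big_geq.
rewrite [LHS]big_nat_recr //= IH [RHS]big_nat_recr //=.
rewrite [\sum_(n.+1 <= _ < n.+1) _]big_geq // mulr0 addr0.
rewrite mulr_sumr -big_split /=.
by apply: eq_big_nat => k /andP[_ kn]; rewrite big_nat_recr //=; ring.
Qed.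

Section exponential_utility.
Variable R : realType.
Implicit Types a y h : R.

(* The utility lost by moving from [y] to [y + h] beyond the first-order
   term, in units of the marginal utility [expR (- a * y)] at [y]. *)
Definition utility_gap a h : R := h - a^-1 * (1 - expR (- a * h)).

Lemma exp_utilityD a y h :
  a^-1 * (1 - expR (- a * (y + h))) =
  a^-1 * (1 - expR (- a * y)) + expR (- a * y) * h
  - expR (- a * y) * utility_gap a h.
Proof. by rewrite /utility_gap [- a * (y + h)]mulrDr expRD; ring. Qed.

Lemma utility_gapE a h : 0 < a ->
  utility_gap a h = a^-1 * (expR (- a * h) - (1 + - a * h)).
Proof. by move=> a0; rewrite /utility_gap; field; rewrite gt_eqF. Qed.

Lemma utility_gap_ge0 a h : 0 < a -> 0 <= utility_gap a h.
Proof.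
move=> a0; rewrite utility_gapE //.
apply: mulr_ge0; first by rewrite invr_ge0 ltW.
by rewrite subr_ge0 expR_ge1Dx.
Qed.

Lemma utility_gap_eq0 a h : 0 < a -> utility_gap a h = 0 -> h = 0.
Proof.
move=> a0; apply: contra_eq => h0; rewrite utility_gapE // gt_eqF //.
apply: mulr_gt0; first by rewrite invr_gt0.
rewrite subr_gt0 expR_gt1Dx //.
by rewrite mulNr oppr_eq0 mulf_neq0 // gt_eqF.
Qed.

End exponential_utility.

Section bounded_functions.
Context {d : measure_display} {Omega : measurableType d} {R : realType}.
Variable P : probability Omega R.
Implicit Types f g : Omega -> R.

Definition ae_bounded f := exists M : R, {ae P, forall w, `|f w| <= M}.

Lemma ae_bounded_cst c : ae_bounded (fun=> c).
Proof. by exists `|c|; apply: aeW. Qed.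

Lemma ae_bounded_le {f g} : ae_bounded f -> (forall w, `|g w| <= `|f w|) ->
  ae_bounded g.
Proof. by move=> [M fM] gf; exists M; apply: filterS fM => w; apply: le_trans. Qed.

Lemma ae_boundedD f g : ae_bounded f -> ae_bounded g ->
  ae_bounded (fun w => f w + g w).
Proof.
move=> [M fM] [N gN]; exists (M + N); apply: filterS2 fM gN => w fw gw.
by rewrite (le_trans (ler_normD _ _)) // lerD.
Qed.

Lemma ae_boundedN f : ae_bounded f -> ae_bounded (fun w => - f w).
Proof. by move=> bf; apply: (ae_bounded_le bf) => w; rewrite normrN. Qed.

Lemma ae_boundedM f g : ae_bounded f -> ae_bounded g ->
  ae_bounded (fun w => f w * g w).
Proof.
move=> [M fM] [N gN]; exists (M * N); apply: filterS2 fM gN => w fw gw.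
by rewrite normrM ler_pM.
Qed.

Lemma ae_bounded_sum (I : eqType) (s : seq I) (F : I -> Omega -> R) :
  (forall i, i \in s -> ae_bounded (F i)) ->
  ae_bounded (fun w => \sum_(i <- s) F i w).
Proof.
elim: s => [_|i s IH bF].
  by exists 0; apply: aeW => w; rewrite big_nil normr0.
under eq_fun do rewrite big_cons.
apply: ae_boundedD; first by apply: bF; rewrite mem_head.
by apply: IH => j js; apply: bF; rewrite in_cons js orbT.
Qed.

Lemma ae_bounded_expR f : ae_bounded f -> ae_bounded (fun w => expR (f w)).
Proof.
move=> [M fM]; exists (expR M); apply: filterS fM => w fw.
by rewrite ger0_norm ?expR_ge0 // ler_expR (le_trans (ler_norm _)).
Qed.

Lemma ae_bounded_funrpos f : ae_bounded f -> ae_bounded f^\+.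
Proof.
move=> bf; apply: (ae_bounded_le bf) => w.
by rewrite ger0_norm ?funrpos_ge0 // /funrpos ge_max ler_norm normr_ge0.
Qed.

Lemma ae_bounded_funrneg f : ae_bounded f -> ae_bounded f^\-.
Proof.
move=> bf; apply: (ae_bounded_le bf) => w.
by rewrite ger0_norm ?funrneg_ge0 // /funrneg ge_max -normrN ler_norm normr_ge0.
Qed.

Lemma integrable_ae_bounded f : measurable_fun setT f -> ae_bounded f ->
  P.-integrable setT (EFin \o f).
Proof.
move=> mf [M fM]; apply/integrableP; split; first exact/measurable_EFinP.
have M0 : (0 <= (Num.max M 0)%:E)%E by rewrite lee_fin le_max lexx orbT.
apply: (le_lt_trans (integral_le_bound _ measurableT _ M0 _)).
- exact/measurable_EFinP.
- by apply: filterS fM => w fw _; rewrite lee_fin (le_trans fw) // le_max lexx.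
apply: lte_mul_pinfty => //.
exact: le_lt_trans (probability_le1 P measurableT) (ltry 1).
Qed.

Lemma integral_ae_ge0 (A : set Omega) g : measurable A -> measurable_fun setT g ->
  {ae P, forall w, 0 <= g w} -> (0 <= \int[P]_(w in A) (g w)%:E)%E.
Proof.
move=> mA mg g0.
rewrite (@ae_eq_integral _ _ _ P A (fun w => (Num.max (g w) 0)%:E)) //.
- by apply: integral_ge0 => w _; rewrite lee_fin le_max lexx orbT.
- by apply/measurable_EFinP; apply: measurable_funS mg.
- apply/measurable_EFinP; apply: measurable_maxr; last exact: measurable_cst.
  exact: measurable_funS mg.
- by apply: filterS g0 => w gw _; rewrite max_l.
Qed.

Lemma ae_notin_integral_le0 (A : set Omega) g : measurable A ->
  measurable_fun setT g -> (forall w, A w -> 0 < g w) ->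
  (\int[P]_(w in A) (g w)%:E <= 0)%E -> {ae P, forall w, ~ A w}.
Proof.
move=> mA mg g0 ig.
have mgA : measurable_fun A (EFin \o g).
  by apply/measurable_EFinP; apply: measurable_funS mg.
have : (\int[P]_(w in A) `|(g w)%:E| = 0)%E.
  rewrite (eq_integral (fun w => (g w)%:E)); last first.
    by move=> w /[!inE] Aw; rewrite gee0_abs // lee_fin ltW // g0.
  by apply/eqP; rewrite eq_le ig integral_ge0 // => w Aw; rewrite lee_fin ltW // g0.
move/(ae_eq_integral_abs _ mA mgA); apply: filterS => w g_eq0 Aw.
by move: (g0 w Aw); rewrite -lte_fin -[(g w)%:E]/((EFin \o g) w) g_eq0 // ltxx.
Qed.

Lemma Rintegral_ge0_eq0 (f : Omega -> R) : measurable_fun setT f ->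
  P.-integrable setT (EFin \o f) -> (forall w, 0 <= f w) ->
  \int[P]_w f w = 0 -> {ae P, forall w, f w = 0}.
Proof.
move=> mf if_ f0 intf0.
have : (\int[P]_w `|(f w)%:E| = 0)%E.
  rewrite (eq_integral (fun w => (f w)%:E)); last first.
    by move=> w _; rewrite gee0_abs // lee_fin.
  by rewrite -[LHS]fineK ?integrable_fin_num //; congr EFin.
have mEf : measurable_fun setT (EFin \o f) by exact/measurable_EFinP.
move/(ae_eq_integral_abs _ measurableT mEf) => f_eq0.
by apply: filterS f_eq0 => w /(_ Logic.I) [].
Qed.

Lemma total_utilityE (T : nat) (u : nat -> R -> R) (r : nat -> Omega -> R)
    (Y : nat -> Omega -> R) :
  (forall t, (1 <= t <= T)%N ->
    P.-integrable setT (EFin \o (fun w => u t (disc r Y t w)))) ->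
  total_utility P T u r Y =
  (\sum_(1 <= t < T.+1) \int[P]_w u t (disc r Y t w))%:E.
Proof.
move=> iu; rewrite /total_utility -sumEFin; apply: eq_big_nat => t tT.
by rewrite fineK // integrable_fin_num // iu.
Qed.

End bounded_functions.

Section sub_measurable.
Context {d : measure_display} {Omega : measurableType d} {R : realType}.
Variables (G : set (set Omega)) (hG : sigma_algebra setT G).
Implicit Types f g : Omega -> R.

Lemma g_sigma_measurableE (A : set Omega) :
  measurable (A : set (g_sigma_algebraType G)) = G A.
Proof. by rewrite /measurable /= sigma_algebra_id. Qed.

Lemma sub_measurableP f :
  sub_measurable G f <-> measurable_fun (setT : set (g_sigma_algebraType G)) f.
Proof.
split=> [mf _ B mB|mf B mB]; first by rewrite setTI g_sigma_measurableE; exact: mf.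
by have := mf measurableT B mB; rewrite setTI g_sigma_measurableE.
Qed.

Lemma sub_measurable_cst (c : R) : sub_measurable G (fun=> c).
Proof. exact/sub_measurableP/measurable_cst. Qed.

Lemma sub_measurableD f g : sub_measurable G f -> sub_measurable G g ->
  sub_measurable G (fun w => f w + g w).
Proof.
by move=> /sub_measurableP mf /sub_measurableP mg; exact/sub_measurableP/measurable_funD.
Qed.

Lemma sub_measurableN f : sub_measurable G f -> sub_measurable G (fun w => - f w).
Proof. by move=> /sub_measurableP mf; exact/sub_measurableP/measurable_funN. Qed.

Lemma sub_measurableM f g : sub_measurable G f -> sub_measurable G g ->
  sub_measurable G (fun w => f w * g w).
Proof.
by move=> /sub_measurableP mf /sub_measurableP mg; exact/sub_measurableP/measurable_funM.
Qed.

Lemma sub_measurable_comp (h : R -> R) f : measurable_fun setT h ->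
  sub_measurable G f -> sub_measurable G (fun w => h (f w)).
Proof.
by move=> mh /sub_measurableP mf; exact/sub_measurableP/(measurableT_comp mh).
Qed.

Lemma sub_measurable_sum (I : eqType) (s : seq I) (F : I -> Omega -> R) :
  (forall i, i \in s -> sub_measurable G (F i)) ->
  sub_measurable G (fun w => \sum_(i <- s) F i w).
Proof.
elim: s => [_|i s IH mF].
  by under eq_fun do rewrite big_nil; exact: sub_measurable_cst.
under eq_fun do rewrite big_cons.
apply: sub_measurableD; first by apply: mF; rewrite mem_head.
by apply: IH => j js; apply: mF; rewrite in_cons js orbT.
Qed.

Lemma sub_measurableS (G' : set (set Omega)) f :
  G `<=` G' -> sub_measurable G f -> sub_measurable G' f.
Proof. by move=> GG' mf B mB; apply: GG'; exact: mf. Qed.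

Lemma sub_measurable_measurable f :
  G `<=` measurable -> sub_measurable G f -> measurable_fun setT f.
Proof. by move=> Gm mf _ B mB; rewrite setTI; apply: Gm; exact: mf. Qed.

End sub_measurable.

Section Linfty.
Context {d : measure_display} {Omega : measurableType d} {R : realType}.
Variables (P : probability Omega R) (G : set (set Omega)).
Hypothesis hG : sigma_algebra setT G.
Implicit Types f g : Omega -> R.

Lemma Linfty_cst c : Linfty P G (fun=> c).
Proof. by split; [exact: sub_measurable_cst|exact: ae_bounded_cst]. Qed.

Lemma LinftyD f g : Linfty P G f -> Linfty P G g -> Linfty P G (fun w => f w + g w).
Proof.
by move=> [mf bf] [mg bg]; split; [exact: sub_measurableD|exact: ae_boundedD].
Qed.

Lemma LinftyN f : Linfty P G f -> Linfty P G (fun w => - f w).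
Proof. by move=> [mf bf]; split; [exact: sub_measurableN|exact: ae_boundedN]. Qed.

Lemma LinftyB f g : Linfty P G f -> Linfty P G g -> Linfty P G (fun w => f w - g w).
Proof. by move=> Lf Lg; apply: LinftyD => //; exact: LinftyN. Qed.

Lemma LinftyM f g : Linfty P G f -> Linfty P G g -> Linfty P G (fun w => f w * g w).
Proof.
by move=> [mf bf] [mg bg]; split; [exact: sub_measurableM|exact: ae_boundedM].
Qed.

Lemma Linfty_expR f : Linfty P G f -> Linfty P G (fun w => expR (f w)).
Proof.
by move=> [mf bf]; split; [exact: sub_measurable_comp|exact: ae_bounded_expR].
Qed.

Lemma Linfty_funrpos f : Linfty P G f -> Linfty P G f^\+.
Proof.
move=> [/(sub_measurableP hG) mf bf]; split; last exact: ae_bounded_funrpos.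
exact/(sub_measurableP hG)/measurable_funrpos.
Qed.

Lemma Linfty_funrneg f : Linfty P G f -> Linfty P G f^\-.
Proof.
move=> [/(sub_measurableP hG) mf bf]; split; last exact: ae_bounded_funrneg.
exact/(sub_measurableP hG)/measurable_funrneg.
Qed.

Lemma Linfty_sum (I : eqType) (s : seq I) (F : I -> Omega -> R) :
  (forall i, i \in s -> Linfty P G (F i)) ->
  Linfty P G (fun w => \sum_(i <- s) F i w).
Proof.
move=> LF; split; first by apply: sub_measurable_sum => // i /LF [].
by apply: ae_bounded_sum => i /LF [].
Qed.

Lemma Linfty_integrable f : G `<=` measurable -> Linfty P G f ->
  P.-integrable setT (EFin \o f).
Proof.
move=> Gm [mf bf]; apply: (integrable_ae_bounded _ bf).
exact: sub_measurable_measurable mf.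
Qed.

Lemma LinftyS (G' : set (set Omega)) f :
  G `<=` G' -> Linfty P G f -> Linfty P G' f.
Proof. by move=> GG' [mf bf]; split => //; exact: sub_measurableS mf. Qed.

Lemma Rintegral_sum (I : eqType) (s : seq I) (f : I -> Omega -> R) :
  G `<=` measurable -> (forall i, i \in s -> Linfty P G (f i)) ->
  \int[P]_w (\sum_(i <- s) f i w) = \sum_(i <- s) \int[P]_w f i w.
Proof.
move=> Gm; elim: s => [_|i s IH Lf].
  under eq_Rintegral do rewrite big_nil.
  by rewrite big_nil Rintegral_cst // mul0r.
under eq_Rintegral do rewrite big_cons.
have Lfs : forall j, j \in s -> Linfty P G (f j).
  by move=> j js; apply: Lf; rewrite in_cons js orbT.
rewrite big_cons RintegralD ?IH //; first exact/(Linfty_integrable Gm)/Lf/mem_head.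
exact/(Linfty_integrable Gm)/Linfty_sum.
Qed.

End Linfty.


Section conditional_expectation.
Context {d : measure_display} {Omega : measurableType d} {R : realType}.
Variables (P : probability Omega R) (G : set (set Omega)).
Hypotheses (hG : sigma_algebra setT G) (Gm : G `<=` measurable).

Section approximation.
Variable f : Omega -> R.
Hypotheses (mf : sub_measurable G f) (f0 : forall w, 0 <= f w).

Local Notation gT := (g_sigma_algebraType G).
Local Notation A n k :=
  (dyadic_approx (setT : set gT) (EFin \o f) n k : set Omega).
Local Notation B n := (integer_approx (setT : set gT) (EFin \o f) n : set Omega).
Local Notation approxf := (approx (setT : set gT) (EFin \o f)).

Let mEf : measurable_fun (setT : set gT) (EFin \o f).
Proof. exact/measurable_EFinP/(sub_measurableP hG). Qed.

Let G_preimage (S : set (\bar R)) : measurable S ->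
  G ((EFin \o f) @^-1` S).
Proof.
by move=> mS; rewrite -g_sigma_measurableE // -[_ @^-1` _]setTI; exact: mEf.
Qed.

Lemma G_dyadic_approx n k : G (A n k).
Proof.
rewrite /dyadic_approx; case: ifPn => _; last first.
  by rewrite -g_sigma_measurableE //; exact: measurable0.
rewrite setTI (_ : [set x | _] = (EFin \o f) @^-1` (EFin @` [set` dyadic_itv R n k])).
  by apply: G_preimage; apply/measurable_image_EFin; exact: measurable_itv.
by apply/seteqP; split => x /=; rewrite inE.
Qed.

Lemma G_integer_approx n : G (B n).
Proof.
rewrite /integer_approx setTI.
rewrite (_ : [set x | _] = (EFin \o f) @^-1` `[n%:R%:E, +oo[%classic).
  by apply: G_preimage; exact: emeasurable_itv.
by apply/seteqP; split => x /=; rewrite in_itv /= andbT.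
Qed.

Lemma integral_mul_approx (V : Omega -> R) n : measurable_fun setT V ->
  (forall w, 0 <= V w) ->
  (\int[P]_w (V w * approxf n w)%:E =
   \sum_(k < n * 2 ^ n) ((k%:R * 2 ^- n)%:E * \int[P]_(w in A n k) (V w)%:E)
   + n%:R%:E * \int[P]_(w in B n) (V w)%:E)%E.
Proof.
move=> mV V0.
have mVS (S : set Omega) : measurable S ->
    measurable_fun setT (fun w => (V w * \1_S w)%:E).
  by move=> mS; apply/measurable_EFinP/measurable_funM => //; exact: measurable_indic.
have VS0 (S : set Omega) w : (0 <= (V w * \1_S w)%:E)%E.
  by rewrite lee_fin mulr_ge0.
have integralZ_indic (c : R) (S : set Omega) : measurable S -> 0 <= c ->
    (\int[P]_w (c%:E * (V w * \1_S w)%:E) = c%:E * \int[P]_(w in S) (V w)%:E)%E.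
  move=> mS c0; rewrite ge0_integralZl_EFin //; last exact: mVS.
  congr (_ * _)%E; rewrite [RHS]integral_mkcond; apply: eq_integral => w _.
  by rewrite /patch indicE; case: ifPn => wS; rewrite ?mulr1 ?mulr0.
have mA k : measurable (A n k) by exact/Gm/G_dyadic_approx.
have mB : measurable (B n) by exact/Gm/G_integer_approx.
rewrite (eq_integral (fun w => (\sum_(k < n * 2 ^ n)
    (k%:R * 2 ^- n)%:E * (V w * \1_(A n k) w)%:E)
    + n%:R%:E * (V w * \1_(B n) w)%:E)%E); last first.
  move=> w _; rewrite /approx mulrDr EFinD mulr_sumr sumEFin; congr (_ + _)%E.
    by congr (_%:E); apply: eq_bigr => k _; rewrite mulrCA.
  by rewrite -EFinM mulrCA.
rewrite ge0_integralD //; last 4 first.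
- by move=> w _; apply: sume_ge0 => k _; rewrite mule_ge0.
- by apply: emeasurable_sum => k; apply: measurable_funeM; exact: mVS.
- by move=> w _; rewrite mule_ge0.
- by apply: measurable_funeM; exact: mVS.
rewrite ge0_integral_sum //; last 2 first.
- by move=> k; apply: measurable_funeM; exact: mVS.
- by move=> k w _; rewrite mule_ge0.
congr (_ + _)%E; last exact: integralZ_indic.
by apply: eq_bigr => k _; apply: integralZ_indic; rewrite // mulr_ge0.
Qed.

Lemma integral_mul_approx_cvg (V : Omega -> R) : measurable_fun setT V ->
  (forall w, 0 <= V w) ->
  (\int[P]_w (V w * f w)%:E = limn (fun n => \int[P]_w (V w * approxf n w)%:E))%E.
Proof.
move=> mV V0.
have mapprox n : measurable_fun setT (approxf n : Omega -> R).
  apply: measurable_funD.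
    apply: measurable_sum => k; apply: measurable_funM; first exact: measurable_cst.
    exact/measurable_indic/Gm/G_dyadic_approx.
  apply: measurable_funM; first exact: measurable_cst.
  exact/measurable_indic/Gm/G_integer_approx.
have approx_ge0 n w : 0 <= approxf n w.
  apply: addr_ge0; last by rewrite mulr_ge0.
  by apply: sumr_ge0 => k _; rewrite mulr_ge0 // mulr_ge0.
rewrite (eq_integral (fun w => limn (fun n => (V w * approxf n w)%:E))); last first.
  move=> w _; apply/esym/cvg_lim => //; apply/cvg_EFin; first exact: nearW.
  apply: cvgMl_tmp.
  exact: (@cvg_approx _ gT R setT (EFin \o f) w (fun x _ => f0 x) Logic.I (ltry _)).
apply: monotone_convergence => //.
- by move=> n; apply/measurable_EFinP/measurable_funM.
- by move=> n w _; rewrite lee_fin mulr_ge0.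
- by move=> w _ m n mn; rewrite lee_fin ler_wpM2l //; exact/lefP/nd_approx.
Qed.

End approximation.

(* Equality of integrals over every set of [G] extends to integrals against
   nonnegative [G]-measurable weights, by approximating the weight from below
   by [G]-simple functions. *)
Lemma integral_mul_ge0_eq (Y C f : Omega -> R) :
  measurable_fun setT Y -> measurable_fun setT C ->
  (forall w, 0 <= Y w) -> (forall w, 0 <= C w) ->
  (forall A, G A -> \int[P]_(w in A) (Y w)%:E = \int[P]_(w in A) (C w)%:E)%E ->
  sub_measurable G f -> (forall w, 0 <= f w) ->
  (\int[P]_w (Y w * f w)%:E = \int[P]_w (C w * f w)%:E)%E.
Proof.
move=> mY mC Y0 C0 YC mf f0.
rewrite !integral_mul_approx_cvg //; apply: congr_lim; apply/funext => n.
rewrite !integral_mul_approx // YC; last exact: G_integer_approx.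
by congr (_ + _)%E; apply: eq_bigr => k _; rewrite YC //; exact: G_dyadic_approx.
Qed.

Lemma cond_exp_ge (Y C : Omega -> R) (m : R) : is_cond_exp P G Y C ->
  P.-integrable setT (EFin \o Y) -> {ae P, forall w, m <= Y w} ->
  {ae P, forall w, m <= C w}.
Proof.
move=> [mC [iC CY]] iY Ym.
have mCT := sub_measurable_measurable Gm mC.
pose A := C @^-1` `]-oo, m[.
have GA : G A by apply: mC; exact: measurable_itv.
have mA := Gm GA.
have icst : P.-integrable A (EFin \o cst m).
  apply: (integrableS measurableT mA (subsetT _)).
  exact: integrable_ae_bounded (measurable_cst _) (ae_bounded_cst _ _).
have iYA : P.-integrable A (EFin \o Y) by exact: integrableS iY.
(* On [A], the integral of [m - C] equals that of [m - Y], which is [<= 0]. *)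
suff notA : {ae P, forall w, ~ A w}.
  by apply: filterS notA => w; rewrite /A /= in_itv /= leNgt => /negP.
apply: (ae_notin_integral_le0 (g := fun w => m - C w) mA).
- by apply: measurable_funB => //; exact: measurable_cst.
- by move=> w; rewrite /A /= in_itv /= subr_gt0.
have : (0 <= \int[P]_(w in A) (Y w - m)%:E)%E.
  apply: integral_ae_ge0 => //; last by apply: filterS Ym => w; rewrite subr_ge0.
  apply: measurable_funB; last exact: measurable_cst.
  by apply/measurable_EFinP; exact: measurable_int iY.
rewrite integralB_EFin // integralB_EFin //; last exact: integrableS iC.
by rewrite CY // sube_le0 sube_ge0 // integrable_fin_num.
Qed.

Lemma is_cond_expN (Y C : Omega -> R) : is_cond_exp P G Y C ->
  P.-integrable setT (EFin \o Y) ->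
  is_cond_exp P G (fun w => - Y w) (fun w => - C w).
Proof.
move=> [mC [iC CY]] iY; split; first exact: sub_measurableN.
split; first exact: integrableN iC.
move=> A GA; have mA := Gm GA.
under eq_integral do rewrite EFinN.
under [RHS]eq_integral do rewrite EFinN.
rewrite integralN; last by apply: integrable_add_def => //; exact: integrableS iC.
rewrite integralN; last by apply: integrable_add_def => //; exact: integrableS iY.
by rewrite CY.
Qed.

Lemma cond_exp_le (Y C : Omega -> R) (M : R) : is_cond_exp P G Y C ->
  P.-integrable setT (EFin \o Y) -> {ae P, forall w, Y w <= M} ->
  {ae P, forall w, C w <= M}.
Proof.
move=> hce iY YM.
have Cm : {ae P, forall w, - M <= - C w}.
  apply: (cond_exp_ge (is_cond_expN hce iY) (integrableN iY)).
  by apply: filterS YM => w; rewrite lerN2.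
by apply: filterS Cm => w; rewrite lerN2.
Qed.

Lemma cond_exp_bounds (Y C : Omega -> R) (m M : R) : is_cond_exp P G Y C ->
  P.-integrable setT (EFin \o Y) -> {ae P, forall w, m <= Y w <= M} ->
  {ae P, forall w, m <= C w <= M}.
Proof.
move=> hce iY YmM.
have Ym : {ae P, forall w, m <= Y w} by apply: filterS YmM => w /andP[].
have YM : {ae P, forall w, Y w <= M} by apply: filterS YmM => w /andP[].
by apply: filterS2 (cond_exp_ge hce iY Ym) (cond_exp_le hce iY YM) => w -> ->.
Qed.

Lemma integral_mul_Linfty_eq (Y C f : Omega -> R) :
  measurable_fun setT Y -> measurable_fun setT C ->
  (forall w, 0 <= Y w) -> (forall w, 0 <= C w) ->
  ae_bounded P Y -> ae_bounded P C ->
  (forall A, G A -> \int[P]_(w in A) (Y w)%:E = \int[P]_(w in A) (C w)%:E)%E ->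
  Linfty P G f ->
  (\int[P]_w (Y w * f w)%:E = \int[P]_w (C w * f w)%:E)%E.
Proof.
move=> mY mC Y0 C0 bY bC YC Lf.
have [[mfp _] [mfn _]] := (Linfty_funrpos hG Lf, Linfty_funrneg hG Lf).
have splitf (V : Omega -> R) : measurable_fun setT V -> ae_bounded P V ->
    (\int[P]_w (V w * f w)%:E =
     \int[P]_w (V w * f^\+ w)%:E - \int[P]_w (V w * f^\- w)%:E)%E.
  move=> mV bV; rewrite -integralB_EFin //; last 2 first.
  - apply: integrable_ae_bounded; last exact/ae_boundedM/(Linfty_funrpos hG Lf).2.
    by apply: measurable_funM => //; exact: sub_measurable_measurable mfp.
  - apply: integrable_ae_bounded; last exact/ae_boundedM/(Linfty_funrneg hG Lf).2.
    by apply: measurable_funM => //; exact: sub_measurable_measurable mfn.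
  apply: eq_integral => w _ /=; rewrite -EFinD -mulrBr.
  by rewrite -[in LHS](congr1 (fun g => g w) (funrposBneg f)).
rewrite (splitf Y mY bY) (splitf C mC bC).
congr (_ - _)%E; first by apply: integral_mul_ge0_eq => // w; exact: funrpos_ge0.
by apply: integral_mul_ge0_eq => // w; exact: funrneg_ge0.
Qed.

Lemma integral_mul_cond_exp (Y C f : Omega -> R) : is_cond_exp P G Y C ->
  measurable_fun setT Y -> (forall w, 0 <= Y w) -> ae_bounded P Y ->
  Linfty P G f ->
  (\int[P]_w (Y w * f w)%:E = \int[P]_w (C w * f w)%:E)%E.
Proof.
move=> hce mY Y0 bY Lf; have [K YK] := bY.
have iY := integrable_ae_bounded mY bY.
have [mCG [iC CY]] := hce.
have mC := sub_measurable_measurable Gm mCG.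
have C0 : {ae P, forall w, 0 <= C w}.
  by apply: (cond_exp_ge (m := 0) hce iY); apply: aeW.
have bC : ae_bounded P C.
  exists K; apply: filterS (cond_exp_bounds (m := - K) (M := K) hce iY _) => [w|].
    by rewrite ler_norml.
  by apply: filterS YK => w; rewrite -ler_norml.
(* [C] is only a.e. nonnegative, so we pass to its nonnegative version [C^\+]. *)
have CC : {ae P, forall w, C w = C^\+ w}.
  by apply: filterS C0 => w C0w; rewrite /funrpos max_l.
have mCp : measurable_fun setT C^\+ by exact: measurable_funrpos.
have mfT := sub_measurable_measurable Gm Lf.1.
transitivity (\int[P]_w (C^\+ w * f w)%:E)%E.
  apply: (integral_mul_Linfty_eq mY mCp Y0 (@funrpos_ge0 _ _ C) bY
    (ae_bounded_funrpos bC) _ Lf).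
  move=> A GA; rewrite -CY //; apply: ae_eq_integral => //; first exact: Gm.
  - by apply/measurable_EFinP; exact: measurable_funS mC.
  - by apply/measurable_EFinP; exact: measurable_funS mCp.
  - by apply: filterS CC => w -> _.
apply: ae_eq_integral => //.
- by apply/measurable_EFinP; exact: measurable_funM.
- by apply/measurable_EFinP; exact: measurable_funM.
- by apply: filterS CC => w -> _.
Qed.

End conditional_expectation.

Section optimal_allocation.
Context {d : measure_display} {Omega : measurableType d} {R : realType}.
Variables (P : probability Omega R) (T : nat) (hT : (1 <= T)%N)
  (F : nat -> set (set Omega)) (hF : filtration T F)
  (r : nat -> Omega -> R)
  (hr_bdd : exists M : R, forall t w, (1 <= t <= T)%N -> 0 <= r t w <= M)
  (hr_pred : forall t, (1 <= t <= T)%N -> sub_measurable (F t.-1) (r t))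
  (alpha : nat -> R) (halpha : forall t, (1 <= t <= T)%N -> 0 < alpha t)
  (x : R) (Z : Omega -> R) (hZ : Linfty P (F T) Z)
  (L : nat -> Omega -> R) (hL : is_L_family P T F alpha (fun w => - Z w) L).

Local Notation b := (beta T alpha).

Let F_sigma t : (t <= T)%N -> sigma_algebra setT (F t).
Proof. by move=> tT; have [/(_ t tT) []] := hF. Qed.

Let F_measurable t : (t <= T)%N -> F t `<=` measurable.
Proof. by move=> tT; have [/(_ t tT) []] := hF. Qed.

Let LinftyF s t (f : Omega -> R) : (s <= t)%N -> (t <= T)%N ->
  Linfty P (F s) f -> Linfty P (F t) f.
Proof. by move=> st tT; apply: LinftyS; have [_] := hF; exact. Qed.

Let measurableF t (f : Omega -> R) : (t <= T)%N -> Linfty P (F t) f ->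
  measurable_fun setT (EFin \o f).
Proof.
move=> tT [mf _]; apply/measurable_EFinP.
exact: sub_measurable_measurable (F_measurable tT) mf.
Qed.

Let integrableF t (f : Omega -> R) : (t <= T)%N -> Linfty P (F t) f ->
  P.-integrable setT (EFin \o f).
Proof. by move=> tT; apply: Linfty_integrable; exact: F_measurable. Qed.

Let alpha_neq0 t : (1 <= t <= T)%N -> alpha t != 0.
Proof. by move=> ht; rewrite gt_eqF // halpha. Qed.

Lemma betaV t : (b t)^-1 = \sum_(t <= k < T.+1) (alpha k)^-1.
Proof. by rewrite /beta invrK. Qed.

Lemma beta_gt0 t : (1 <= t <= T)%N -> 0 < b t.
Proof.
move=> /andP[t1 tT]; rewrite -invr_gt0 betaV big_ltn ?ltnS //.
rewrite ltr_wpDr ?invr_gt0 ?halpha ?t1 //.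
rewrite big_nat_cond; apply: sumr_ge0 => k /andP[/andP[tk kT] _].
by rewrite invr_ge0 ltW // halpha // (leq_trans t1 (ltnW tk)) -ltnS.
Qed.

Lemma betaV_rec t : (1 <= t < T)%N -> (b t)^-1 = (alpha t)^-1 + (b t.+1)^-1.
Proof. by move=> /andP[t1 tT]; rewrite !betaV big_ltn // ltnS ltnW. Qed.

Let beta_neq0 t : (1 <= t <= T)%N -> b t != 0.
Proof. by move=> ht; rewrite gt_eqF // beta_gt0. Qed.

Lemma L_T w : L T w = expR (alpha T * Z w).
Proof. by have [-> _] := hL; rewrite mulrNN. Qed.

Lemma L_pred s : (1 <= s < T)%N -> exists C, is_cond_exp P (F s) (L s.+1) C /\
  forall w, L s w = powR (C w) (b s / b s.+1).
Proof.
move=> /andP[s1 sT]; have [_ /(_ s.+1)] := hL.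
by rewrite ltnS s1 sT => /(_ isT) [C [hC LC]]; exists C.
Qed.

(* The positive lower bound keeps [ln (L t)] bounded. *)
Definition L_regular t := [/\ sub_measurable (F t) (L t), forall w, 0 <= L t w &
  exists m M : R, 0 < m /\ {ae P, forall w, m <= L t w <= M}].

Lemma L_regular_T : L_regular T.
Proof.
have [mZ [K ZK]] := hZ; have aT : 0 < alpha T by rewrite halpha // hT leqnn.
have FT := F_sigma (leqnn T).
rewrite /L_regular; split.
- rewrite (_ : L T = fun w => expR (alpha T * Z w)); last exact/funext/L_T.
  apply: (sub_measurable_comp FT) => //.
  by apply: (sub_measurableM FT) => //; exact: sub_measurable_cst.
- by move=> w; rewrite L_T expR_ge0.
exists (expR (alpha T * - K)), (expR (alpha T * K)); split; first exact: expR_gt0.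
apply: filterS ZK => w; rewrite ler_norml => /andP[ZK1 ZK2].
by rewrite L_T !ler_expR !ler_pM2l // ZK1 ZK2.
Qed.

Lemma L_regular_pred s : (1 <= s < T)%N -> L_regular s.+1 -> L_regular s.
Proof.
move=> hs [mL1 L1_0 [m [M [m0 L1mM]]]].
have [C [hC LsC]] := L_pred hs.
have sT : (s <= T)%N by case/andP: hs => _ /ltnW.
have s1T : (1 <= s.+1 <= T)%N by case/andP: hs.
have s0T : (1 <= s <= T)%N by case/andP: hs => -> /ltnW.
have iL1 : P.-integrable setT (EFin \o L s.+1).
  apply: (integrableF (t := s.+1)); first by case/andP: s1T.
  split => //; exists M; apply: filterS L1mM => w /andP[mL LM].
  by rewrite ger0_norm.
have CmM := cond_exp_bounds (F_sigma sT) (F_measurable sT) hC iL1 L1mM.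
have p0 : 0 <= b s / b s.+1.
  by rewrite divr_ge0 // ltW // beta_gt0.
rewrite /L_regular (_ : L s = fun w => powR (C w) (b s / b s.+1));
  last exact/funext/LsC.
split.
- have [/(sub_measurableP (F_sigma sT)) mC _] := hC.
  apply/(sub_measurableP (F_sigma sT)).
  exact: measurableT_comp (measurable_powR _) mC.
- by move=> w; rewrite powR_ge0.
exists (powR m (b s / b s.+1)), (powR M (b s / b s.+1)); split; first exact: powR_gt0.
apply: filterS CmM => w /andP[mC CM].
have C0 : 0 <= C w by rewrite (le_trans (ltW m0)).
by rewrite !ge0_ler_powR // ?nnegrE // ?(ltW m0) // (le_trans C0).
Qed.

Lemma L_regularP t : (1 <= t <= T)%N -> L_regular t.
Proof.
move=> /andP[t1 tT].
suff L_regular_sub k : (k < T)%N -> L_regular (T - k).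
  by rewrite -(subKn tT); apply: L_regular_sub; lia.
elim: k => [_|k IH kT]; first by rewrite subn0; exact: L_regular_T.
apply: L_regular_pred; first by apply/andP; split; lia.
have -> : (T - k.+1).+1 = (T - k)%N by lia.
exact/IH/ltnW.
Qed.

Lemma Linfty_L t : (1 <= t <= T)%N -> Linfty P (F t) (L t).
Proof.
move=> ht; have [mL L0 [m [M [m0 LmM]]]] := L_regularP ht.
split => //; exists M; apply: filterS LmM => w /andP[_ LM].
by rewrite ger0_norm.
Qed.

Lemma L_ge0 t w : (1 <= t <= T)%N -> 0 <= L t w.
Proof. by move=> /L_regularP []. Qed.

Lemma L_gt0_ae t : (1 <= t <= T)%N -> {ae P, forall w, 0 < L t w}.
Proof.
move=> /L_regularP [_ _ [m [M [m0 LmM]]]].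
by apply: filterS LmM => w /andP[mL _]; exact: lt_le_trans mL.
Qed.

Lemma Linfty_lnL t : (1 <= t <= T)%N -> Linfty P (F t) (fun w => ln (L t w)).
Proof.
move=> ht; have tT : (t <= T)%N by case/andP: ht.
have [mL _ [m [M [m0 LmM]]]] := L_regularP ht.
split; first exact: (sub_measurable_comp (F_sigma tT) (@measurable_ln R)).
exists (`|ln m| + `|ln M|); apply: filterS LmM => w /andP[mLw LMw].
have L0 : 0 < L t w by exact: lt_le_trans mLw.
have lnmL : ln m <= ln (L t w) by rewrite ler_ln // posrE (lt_le_trans L0).
have lnLM : ln (L t w) <= ln M by rewrite ler_ln // posrE (lt_le_trans L0).
have := ler_norm (- ln m); have := ler_norm (ln M); rewrite normrN ler_norml.
by have := normr_ge0 (ln m); have := normr_ge0 (ln M); lra.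
Qed.

Definition opt_disc t w := (alpha t)^-1 * (b 1 * x - ln (L t w)
  + \sum_(1 <= k < t) b k.+1 / alpha k * ln (L k w)).

Lemma Linfty_opt_disc t : (1 <= t <= T)%N -> Linfty P (F t) (opt_disc t).
Proof.
move=> /andP[t1 tT]; have Ft := F_sigma tT.
apply: (LinftyM Ft); first exact: Linfty_cst.
apply: (LinftyD Ft).
  apply: (LinftyB Ft); first exact: Linfty_cst.
  by apply: Linfty_lnL; rewrite t1.
apply: (Linfty_sum Ft) => k; rewrite mem_index_iota => /andP[k1 kt].
apply: (LinftyM Ft); first exact: Linfty_cst.
apply: (LinftyF (ltnW kt) tT); apply: Linfty_lnL.
by rewrite k1 (leq_trans (ltnW kt)).
Qed.

Lemma sum_opt_disc w : \sum_(1 <= t < T.+1) opt_disc t w = x - Z w.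
Proof.
pose l k := ln (L k w).
have -> : \sum_(1 <= t < T.+1) opt_disc t w =
    b 1 * x * \sum_(1 <= t < T.+1) (alpha t)^-1
    - \sum_(1 <= t < T.+1) (alpha t)^-1 * l t
    + \sum_(1 <= t < T.+1) (alpha t)^-1 * \sum_(1 <= k < t) b k.+1 / alpha k * l k.
  rewrite mulr_sumr -sumrB -big_split /=.
  by apply: eq_bigr => t _; rewrite /opt_disc /l; ring.
rewrite -betaV mulrAC mulfV ?beta_neq0 ?hT // mul1r sum_mul_partial_sum.
rewrite [X in _ + X]big_nat_recr //= [\sum_(T.+1 <= _ < T.+1) _]big_geq // mulr0 addr0.
rewrite [X in _ + X](eq_big_nat _ _ (F2 := fun k => (alpha k)^-1 * l k)); last first.
  move=> k /andP[k1 kT]; rewrite -(betaV k.+1); field.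
  by rewrite beta_neq0 ?alpha_neq0 ?k1 ?kT //= ltnW.
rewrite [X in _ - X]big_nat_recr //= /l L_T expRK; field.
by rewrite alpha_neq0 // hT leqnn.
Qed.

Definition marginal t w := expR (- alpha t * opt_disc t w).

Lemma Linfty_marginal t : (1 <= t <= T)%N -> Linfty P (F t) (marginal t).
Proof.
move=> ht; have Ft := F_sigma (proj2 (andP ht)).
apply: (Linfty_expR Ft); apply: (LinftyM Ft); first exact: Linfty_cst.
exact: Linfty_opt_disc.
Qed.

Definition marginal_factor s w :=
  expR (- (b 1 * x + \sum_(1 <= k < s.+1) b k.+1 / alpha k * ln (L k w))).

Lemma Linfty_marginal_factor s : (1 <= s <= T)%N ->
  Linfty P (F s) (marginal_factor s).
Proof.
move=> /andP[s1 sT]; have Fs := F_sigma sT.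
apply: (Linfty_expR Fs); apply: (LinftyN Fs); apply: (LinftyD Fs).
  exact: Linfty_cst.
apply: (Linfty_sum Fs) => k; rewrite mem_index_iota ltnS => /andP[k1 ks].
apply: (LinftyM Fs); first exact: Linfty_cst.
apply: (LinftyF ks sT); apply: Linfty_lnL.
by rewrite k1 (leq_trans ks).
Qed.

Lemma marginalSE s w : (1 <= s < T)%N -> 0 < L s.+1 w ->
  marginal s.+1 w = L s.+1 w * marginal_factor s w.
Proof.
move=> /andP[s1 sT] L0; rewrite /marginal /marginal_factor -{1}(lnK L0) -expRD.
congr expR; rewrite /opt_disc big_nat_recr //=; field.
by rewrite !alpha_neq0 ?s1 ?sT ?(ltnW sT).
Qed.

(* Uses [(1 + beta_(s+1) / alpha_s) * (beta_s / beta_(s+1)) = 1], i.e. the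
   recursion [1 / beta_s = 1 / alpha_s + 1 / beta_(s+1)]. *)
Lemma marginal_powRE s (C : Omega -> R) w : (1 <= s < T)%N ->
  L s w = powR (C w) (b s / b s.+1) -> 0 < C w ->
  marginal s w = C w * marginal_factor s w.
Proof.
move=> hs LsC C0; have /andP[s1 sT] := hs.
have s0T : (1 <= s <= T)%N by rewrite s1 ltnW.
have s1T : (1 <= s.+1 <= T)%N by rewrite sT.
have expo : (1 + b s.+1 / alpha s) * (b s / b s.+1) = 1.
  have -> : (1 + b s.+1 / alpha s) * (b s / b s.+1) =
      b s * ((alpha s)^-1 + (b s.+1)^-1).
    by field; rewrite alpha_neq0 // beta_neq0.
  by rewrite -betaV_rec // mulfV // beta_neq0.
rewrite /marginal /marginal_factor -{1}(lnK C0) -expRD; congr expR.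
rewrite /opt_disc big_nat_recr //= LsC ln_powR.
set lC := ln (C w).
apply/eqP; rewrite -subr_eq0; apply/eqP.
transitivity (lC * ((1 + b s.+1 / alpha s) * (b s / b s.+1) - 1)).
  by field; rewrite alpha_neq0 // beta_neq0.
by rewrite expo subrr mulr0.
Qed.

Lemma marginal_martingale s (D : Omega -> R) : (1 <= s < T)%N ->
  Linfty P (F s) D ->
  (\int[P]_w (marginal s.+1 w * D w)%:E = \int[P]_w (marginal s w * D w)%:E)%E.
Proof.
move=> hs LD; have /andP[s1 sT] := hs.
have s0T : (1 <= s <= T)%N by rewrite s1 ltnW.
have s1T : (1 <= s.+1 <= T)%N by rewrite sT.
have Fs := F_sigma (ltnW sT); have Fs1 := F_sigma sT.
have [C [hC LsC]] := L_pred hs.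
have [mL1 _ [m [M [m0 L1mM]]]] := L_regularP s1T.
have [_ bL1] := Linfty_L s1T.
have mL1T := sub_measurable_measurable (F_measurable sT) mL1.
have CmM := cond_exp_bounds Fs (F_measurable (ltnW sT)) hC
  (integrableF sT (Linfty_L s1T)) L1mM.
have C0 : {ae P, forall w, 0 < C w}.
  by apply: filterS CmM => w /andP[mC _]; exact: lt_le_trans mC.
have LC : Linfty P (F s) C.
  split; first by case: hC.
  exists M; apply: filterS CmM => w /andP[mC CM].
  by rewrite ger0_norm // (le_trans (ltW m0)).
have LGD := LinftyM Fs (Linfty_marginal_factor s0T) LD.
transitivity (\int[P]_w (L s.+1 w * (marginal_factor s w * D w))%:E)%E.
  apply: ae_eq_integral => //.
  - apply: (measurableF sT); apply: (LinftyM Fs1 (Linfty_marginal s1T)).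
    exact: LinftyF (leqnSn s) sT LD.
  - by apply: (measurableF sT); apply: (LinftyM Fs1 (Linfty_L s1T)); exact: LinftyF LGD.
  - by apply: filterS (L_gt0_ae s1T) => w L0 _; rewrite marginalSE // mulrA.
rewrite (integral_mul_cond_exp Fs (F_measurable (ltnW sT)) hC mL1T _ bL1 LGD);
  last by move=> w; exact: L_ge0.
apply: ae_eq_integral => //.
- exact: measurableF (ltnW sT) (LinftyM Fs LC LGD).
- exact: measurableF (ltnW sT) (LinftyM Fs (Linfty_marginal s0T) LD).
- by apply: filterS C0 => w Cw _; rewrite (marginal_powRE hs (LsC w) Cw) mulrA.
Qed.

Lemma marginal_terminal t (D : Omega -> R) : (1 <= t <= T)%N ->
  Linfty P (F t) D ->
  (\int[P]_w (marginal t w * D w)%:E = \int[P]_w (marginal T w * D w)%:E)%E.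
Proof.
move=> /andP[t1 tT]; have := subnKC tT; move: (T - t)%N => n.
elim: n t t1 {tT} D => [|n IH] t t1 D tnT LD; first by rewrite -tnT addn0.
have tT : (t < T)%N by rewrite -tnT; lia.
rewrite -marginal_martingale ?t1 //; apply: IH => //; first by rewrite -tnT; lia.
exact: LinftyF (leqnSn t) tT LD.
Qed.

Lemma Bfac_ge1 t w : (t <= T)%N -> 1 <= Bfac r t w.
Proof.
have [M rM] := hr_bdd.
elim: t => [|t IH] tT; first by rewrite /Bfac big_geq.
rewrite /Bfac big_nat_recr //= mulr_ege1 ?IH ?(ltnW tT) //.
by have /andP[r0 _] := rM t.+1 w tT; rewrite lerDl.
Qed.

Lemma Linfty_Bfac t : (t <= T)%N -> Linfty P (F t) (Bfac r t).
Proof.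
have [M rM] := hr_bdd.
elim: t => [|t IH] tT.
  rewrite (_ : Bfac r 0 = fun=> 1); last by apply/funext => w; rewrite /Bfac big_geq.
  exact/Linfty_cst/F_sigma.
rewrite (_ : Bfac r t.+1 = fun w => Bfac r t w * (1 + r t.+1 w)); last first.
  by apply/funext => w; rewrite /Bfac big_nat_recr.
apply: (LinftyM (F_sigma tT)); first exact: LinftyF (leqnSn t) tT (IH (ltnW tT)).
apply: (LinftyD (F_sigma tT)); first exact/Linfty_cst/F_sigma.
split.
  apply: (sub_measurableS (G := F t)); first by have [_] := hF; apply.
  by apply: (hr_pred (t := t.+1)).
by exists M; apply: aeW => w; have /andP[r0 rM'] := rM t.+1 w tT; rewrite ger0_norm.
Qed.

Lemma Linfty_disc (V : nat -> Omega -> R) t : (t <= T)%N ->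
  Linfty P (F t) (V t) -> Linfty P (F t) (disc r V t).
Proof.
move=> tT [mV bV]; have Ft := F_sigma tT.
have B0 w : 0 < Bfac r t w by exact: lt_le_trans ltr01 (Bfac_ge1 w tT).
split.
  rewrite (_ : disc r V t = fun w => V t w * expR (- ln (Bfac r t w))).
    apply: (sub_measurableM Ft) => //.
    have [/(sub_measurableP Ft) mB _] := Linfty_Bfac tT.
    apply/(sub_measurableP Ft); apply: measurableT_comp => //.
    by apply: measurable_funN; exact: measurableT_comp (@measurable_ln R) mB.
  by apply/funext => w; rewrite /disc expRN lnK // posrE.
apply: (ae_bounded_le bV) => w.
rewrite /disc normrM normfV (ger0_norm (ltW (B0 w))) ler_pdivrMr //.
by rewrite ler_peMr // Bfac_ge1.
Qed.

Definition opt_alloc t w := Bfac r t w * opt_disc t w.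

Lemma disc_opt_alloc t w : (t <= T)%N -> disc r opt_alloc t w = opt_disc t w.
Proof.
move=> tT; rewrite /disc /opt_alloc mulrC mulKf // gt_eqF //.
exact: lt_le_trans ltr01 (Bfac_ge1 w tT).
Qed.

Lemma admissible_opt_alloc : admissible P T F r (fun w => x - Z w) opt_alloc.
Proof.
split; last first.
  apply: aeW => w; rewrite -sum_opt_disc; apply: eq_big_nat => t /andP[_ tT].
  by rewrite disc_opt_alloc.
move=> t /andP[t1 tT]; have Ft := F_sigma tT.
have Lt : Linfty P (F t) (opt_alloc t).
  by apply: (LinftyM Ft); [exact: Linfty_Bfac|apply: Linfty_opt_disc; rewrite t1].
by split; [case: Lt|exact: LinftyF tT (leqnn T) Lt].
Qed.

Section optimality.
Variables (X : nat -> Omega -> R)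
  (hXadm : admissible P T F r (fun w => x - Z w) X)
  (hXopt : total_utility P T
             (fun t y => (alpha t)^-1 * (1 - expR (- alpha t * y))) r X
           = Uval P T F (fun t y => (alpha t)^-1 * (1 - expR (- alpha t * y))) r
               (fun w => x - Z w)).

Local Notation u := (fun t y => (alpha t)^-1 * (1 - expR (- alpha t * y))).

Let Linfty_utility t (V : Omega -> R) : (t <= T)%N -> Linfty P (F t) V ->
  Linfty P (F t) (fun w => u t (V w)).
Proof.
move=> tT LV; have Ft := F_sigma tT.
apply: (LinftyM Ft); first exact: Linfty_cst.
apply: (LinftyB Ft); first exact: Linfty_cst.
by apply: (Linfty_expR Ft); apply: (LinftyM Ft) => //; exact: Linfty_cst.
Qed.

Definition deviation t w := disc r X t w - opt_disc t w.

Definition utility_loss t w := marginal t w * utility_gap (alpha t) (deviation t w).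

Lemma Linfty_deviation t : (1 <= t <= T)%N -> Linfty P (F t) (deviation t).
Proof.
move=> ht; have tT : (t <= T)%N by case/andP: ht.
apply: (LinftyB (F_sigma tT)); last exact: Linfty_opt_disc.
have [/(_ t ht) [mX [_ bX]] _] := hXadm.
exact: Linfty_disc.
Qed.

Lemma Linfty_utility_loss t : (1 <= t <= T)%N -> Linfty P (F t) (utility_loss t).
Proof.
move=> ht; have tT : (t <= T)%N by case/andP: ht.
have Ft := F_sigma tT; have Ld := Linfty_deviation ht.
apply: (LinftyM Ft); first exact: Linfty_marginal.
apply: (LinftyB Ft) => //.
apply: (LinftyM Ft); first exact: Linfty_cst.
apply: (LinftyB Ft); first exact: Linfty_cst.
by apply: (Linfty_expR Ft); apply: (LinftyM Ft) => //; exact: Linfty_cst.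
Qed.

Lemma expected_utility_deviation t : (1 <= t <= T)%N ->
  \int[P]_w u t (disc r X t w) = \int[P]_w u t (opt_disc t w)
    + \int[P]_w (marginal t w * deviation t w) - \int[P]_w utility_loss t w.
Proof.
move=> ht; have tT : (t <= T)%N by case/andP: ht.
have Ft := F_sigma tT; have Ld := Linfty_deviation ht.
have LY := Linfty_utility tT (Linfty_opt_disc ht).
have LMd := LinftyM Ft (Linfty_marginal ht) Ld.
rewrite -RintegralD //; try exact: integrableF LY; try exact: integrableF LMd.
rewrite -RintegralB //; last exact: integrableF (Linfty_utility_loss ht).
  apply: eq_Rintegral => w _.
  have -> : disc r X t w = opt_disc t w + deviation t w by rewrite addrC subrK.
  exact: exp_utilityD.
exact/(integrableF tT)/LinftyD.
Qed.

Lemma sum_marginal_deviation :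
  \sum_(1 <= t < T.+1) \int[P]_w (marginal t w * deviation t w) = 0.
Proof.
have FT := F_sigma (leqnn T); have hTT : (1 <= T <= T)%N by rewrite hT leqnn.
have LMd t : (1 <= t <= T)%N ->
    Linfty P (F T) (fun w => marginal T w * deviation t w).
  move=> ht; apply: (LinftyM FT); first exact: Linfty_marginal.
  by apply: (LinftyF (proj2 (andP ht)) (leqnn T)); exact: Linfty_deviation.
transitivity (\sum_(1 <= t < T.+1) \int[P]_w (marginal T w * deviation t w)).
  apply: eq_big_nat => t ht; rewrite ltnS in ht; congr fine.
  exact: marginal_terminal (Linfty_deviation ht).
rewrite -(Rintegral_sum FT (F_measurable (leqnn T))); last first.
  by move=> t; rewrite mem_index_iota ltnS; exact: LMd.
have sum_dev0 : {ae P, forall w, \sum_(1 <= t < T.+1) deviation t w = 0}.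
  have [_ sumX] := hXadm; apply: filterS sumX => w sumXw.
  by rewrite sumrB sumXw sum_opt_disc subrr.
rewrite /Rintegral (ae_eq_integral (cst 0%E)) ?integral0 //.
- apply: (measurableF (leqnn T)); apply: (Linfty_sum FT) => t.
  by rewrite mem_index_iota ltnS; exact: LMd.
- by apply: filterS sum_dev0 => w sum0 _; rewrite -mulr_sumr sum0 mulr0.
Qed.

Lemma sum_utility_loss_le0 : \sum_(1 <= t < T.+1) \int[P]_w utility_loss t w <= 0.
Proof.
have le_opt : (total_utility P T u r opt_alloc <= total_utility P T u r X)%E.
  rewrite hXopt; apply: ereal_sup_ubound; exists opt_alloc => //.
  exact: admissible_opt_alloc.
have intu (Y : nat -> Omega -> R) : admissible P T F r (fun w => x - Z w) Y ->
    forall t, (1 <= t <= T)%N ->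
    P.-integrable setT (EFin \o (fun w => u t (disc r Y t w))).
  move=> [LY _] t ht; have tT : (t <= T)%N by case/andP: ht.
  have [mY [_ bY]] := LY t ht.
  by apply: (integrableF tT); apply: Linfty_utility => //; exact: Linfty_disc.
have [iX iopt] := (intu X hXadm, intu opt_alloc admissible_opt_alloc).
move: le_opt; rewrite !total_utilityE //.
rewrite lee_fin.
rewrite (eq_big_nat _ _ (F2 := fun t => \int[P]_w u t (opt_disc t w))); last first.
  move=> t /andP[_ tT]; apply: eq_Rintegral => w _.
  by rewrite disc_opt_alloc // -ltnS.
rewrite (eq_big_nat _ _ (F1 := fun t => \int[P]_w u t (disc r X t w))
  (F2 := fun t => \int[P]_w u t (opt_disc t w)
    + \int[P]_w (marginal t w * deviation t w)
    - \int[P]_w utility_loss t w)); last first.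
  by move=> t; rewrite ltnS => ht; exact: expected_utility_deviation.
by rewrite sumrB big_split /= sum_marginal_deviation addr0; lra.
Qed.

Lemma utility_loss_ge0 t w : (1 <= t <= T)%N -> 0 <= utility_loss t w.
Proof. by move=> ht; rewrite mulr_ge0 ?expR_ge0 // utility_gap_ge0 // halpha. Qed.

Lemma expected_utility_loss_eq0 t : (1 <= t <= T)%N ->
  \int[P]_w utility_loss t w = 0.
Proof.
move=> ht; apply/eqP; rewrite eq_le Rintegral_ge0 ?andbT; last first.
  by move=> w _; exact: utility_loss_ge0.
apply: le_trans sum_utility_loss_le0.
have t_in : t \in index_iota 1 T.+1 by rewrite mem_index_iota ltnS.
rewrite (bigD1_seq t) //= ?iota_uniq // lerDl big_seq_cond.
apply: sumr_ge0 => k /andP[k_in _]; apply: Rintegral_ge0 => w _.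
by apply: utility_loss_ge0; move: k_in; rewrite mem_index_iota ltnS.
Qed.

Lemma deviation_eq0 t : (1 <= t <= T)%N -> {ae P, forall w, deviation t w = 0}.
Proof.
move=> ht; have tT : (t <= T)%N by case/andP: ht.
have Lloss := Linfty_utility_loss ht.
have mloss := sub_measurable_measurable (F_measurable tT) Lloss.1.
have := Rintegral_ge0_eq0 mloss (integrableF tT Lloss)
  (fun w => @utility_loss_ge0 t w ht) (expected_utility_loss_eq0 ht).
apply: filterS => w /eqP; rewrite mulf_eq0 gt_eqF ?expR_gt0 //= => /eqP.
by apply: utility_gap_eq0; exact: halpha.
Qed.

Lemma X_opt_alloc t : (1 <= t <= T)%N -> {ae P, forall w, X t w = opt_alloc t w}.
Proof.
move=> ht; have tT : (t <= T)%N by case/andP: ht.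
apply: filterS (deviation_eq0 ht) => w /eqP; rewrite subr_eq0 /opt_alloc => /eqP <-.
rewrite /disc mulrC divfK // gt_eqF //.
exact: lt_le_trans ltr01 (Bfac_ge1 w tT).
Qed.

End optimality.

End optimal_allocation.
Theorem proposition3p5 (d : measure_display) (Omega : measurableType d)
  (R : realType) (P : probability Omega R) (T : nat) (hT : (1 <= T)%N)
  (F : nat -> set (set Omega)) (hF : filtration T F)
  (r : nat -> Omega -> R)
  (hr_bdd : exists M : R, forall t w, (1 <= t <= T)%N -> 0 <= r t w <= M)
  (hr_pred : forall t, (1 <= t <= T)%N -> sub_measurable (F t.-1) (r t))
  (alpha : nat -> R) (halpha : forall t, (1 <= t <= T)%N -> 0 < alpha t)
  (x : R) (Z : Omega -> R) (hZ : Linfty P (F T) Z)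
  (X : nat -> Omega -> R)
  (hXadm : admissible P T F r (fun w => x - Z w) X)
  (hXopt : total_utility P T
             (fun t y => (alpha t)^-1 * (1 - expR (- alpha t * y))) r X
           = Uval P T F (fun t y => (alpha t)^-1 * (1 - expR (- alpha t * y))) r
               (fun w => x - Z w))
  (L : nat -> Omega -> R) (hL : is_L_family P T F alpha (fun w => - Z w) L) :
  {ae P, forall w, X 1%N w = Bfac r 1 w / alpha 1%N *
                     (beta T alpha 1 * x - ln (L 1%N w))} /\
  (forall t, (2 <= t <= T)%N ->
    {ae P, forall w, X t w = Bfac r t w / alpha t *
       (beta T alpha 1 * x - ln (L t w)
        + \sum_(1 <= k < t) beta T alpha k.+1 / alpha k * ln (L k w))}).
Proof.
have X_opt := X_opt_alloc hT hF hr_bdd hr_pred halpha hZ hL hXadm hXopt.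
split=> [|t /andP[t2 tT]].
  apply: filterS (X_opt 1%N _) => [w ->|]; last by rewrite leqnn hT.
  by rewrite /opt_alloc /opt_disc big_geq // addr0 mulrA.
apply: filterS (X_opt t _) => [w ->|]; last by rewrite tT (leq_trans _ t2).
by rewrite /opt_alloc /opt_disc mulrA.
Qed.
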